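(* Let $A\in\mathbb{R}^{n\times n}$ with $A\ge0$, $B\in\mathbb{R}^{n\times m}$, $C\in\mathbb{R}^{p\times n}$, $E\in\mathbb{R}^{n\times q}$ with $E\ge 0$, and $F\in\mathbb{R}^{p\times r}$ (no sign restriction). Consider \[ x(t+1)=Ax(t)+Bu(t)+Ew(t),\qquad y(t)=Cx(t)+Fv(t), \] where $w(t)\in\mathbb{R}^q_+$ and $v(t)\in\mathbb{R}^r_+$ are random vectors with $\mathbb{E}[w(t)]=\mathbf{1}$ and $\mathbb{E}[v(t)]=\mathbf{1}$ for all $t$. Let the upper and lower estimates evolve as \[ \overline{x}(t+1)=(A-\overline{L}C)\overline{x}(t)+\overline{L}y(t)+Bu(t),\qquad \underline{x}(t+1)=(A-\underline{L}C)\underline{x}(t)+\underline{L}y(t)+Bu(t), \] with $\overline{L},\underline{L}\in\mathbb{R}^{n\times p}$, and let $u(t)=\overline{K}\,\overline{x}(t)+\underline{K}\,\underline{x}(t)$ with $\overline{K},\underline{K}\in\mathbb{R}^{m\times n}$. Let $X(t)=\mathbb{E}[(x(t),\overline{x}(t),\underline{x}(t))]\in\mathbb{R}^{3n}$ and $\mathcal{X}=\{(x,\overline{x},\underline{x}) : x,\overline{x},\underline{x}\in\mathbb{R}^n_+,\ \underline{x}\le x\le \overline{x}\}$, and suppose the initialization satisfies $X(0)\in\mathcal{X}$. Then the following are equivalent: (i) The matrices $A+B(\overline{K}+\underline{K})$, $A-\overline{L}C$ and $A-\underline{L}C$ are Schur, and \[ A+B(\overline{K}+\underline{K})\ge 0,\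 A+B\overline{K}\ge0,\ B\overline{K}\ge0,\ A-\overline{L}C\ge0,\ A-\underline{L}C\ge0,\ B\overline{K}+\underline{L}C\ge0, \] \[ \overline{L}F\mathbf{1}-E\mathbf{1}\ge0,\quad E\mathbf{1}-\underline{L}F\mathbf{1}\ge0,\quad \underline{L}F\mathbf{1}\ge 0. \] (ii) For all initial conditions with $x(0)\in\mathbb{R}^n_+$ and $X(0)\in\mathcal{X}$, the expected state satisfies $X(t)\in\mathcal{X}$ for all $t\ge0$ and $X(t)$ converges asymptotically to a single fixed point $X^*\in\mathcal{X}$.
   Context: All inequalities between matrices or vectors are element-wise; $\mathbb{R}^k_+$ is the closed nonnegative orthant and $\mathbf{1}$ denotes a vector of ones of the appropriate dimension. A square matrix is Schur if its spectral radius is less than $1$. *)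

From HB Require Import structures.
From mathcomp Require Import all_boot all_order all_algebra.
From mathcomp Require Import all_classical all_reals all_analysis.
From mathcomp Require Import complex.
Set Implicit Arguments. Unset Strict Implicit. Unset Printing Implicit Defensive.
Import Order.TTheory GRing.Theory Num.Theory numFieldNormedType.Exports.
Local Open Scope ring_scope.

Definition mx_nonneg (R : realType) (m k : nat) (M : 'M[R]_(m, k)) : Prop :=
  forall i j, 0 <= M i j.

Definition cv_le (R : realType) (n : nat) (x y : 'cV[R]_n) : Prop :=
  forall i, x i 0 <= y i 0.

Definition ones (R : realType) (k : nat) : 'cV[R]_k := const_mx 1.

(* Schur: spectral radius < 1, i.e. every (complex) eigenvalue of M has
   modulus < 1 (the spectral radius is the max of these moduli). *)
Definition is_Schur (R : realType) (n : nat) (M : 'M[R]_n) : Prop :=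
  forall z : R[i], eigenvalue (map_mx (fun x : R => (x%:C)%C) M) z -> `|z| < 1.

Definition in_calX (R : realType) (n : nat) (X : 'cV[R]_n * 'cV[R]_n * 'cV[R]_n)
  : Prop :=
  let: (x, xb, xl) := X in
  [/\ cv_le 0 x, cv_le 0 xb, cv_le 0 xl, cv_le xl x & cv_le x xb].

(* Realisation (sample path, for a fixed outcome) of the closed-loop system
     x(t+1)  = A x(t) + B u(t) + E w(t),      y(t) = C x(t) + F v(t),
     xb(t+1) = (A - Lb C) xb(t) + Lb y(t) + B u(t),
     xl(t+1) = (A - Ll C) xl(t) + Ll y(t) + B u(t),
     u(t)    = Kb xb(t) + Kl xl(t),
   returning (x(t), xb(t), xl(t)). *)
Fixpoint traj (R : realType) (n m p q r : nat)
  (A : 'M[R]_n) (B : 'M[R]_(n, m)) (C : 'M[R]_(p, n)) (E : 'M[R]_(n, q))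
  (F : 'M[R]_(p, r)) (Lb Ll : 'M[R]_(n, p)) (Kb Kl : 'M[R]_(m, n))
  (w : nat -> 'cV[R]_q) (v : nat -> 'cV[R]_r) (x0 xb0 xl0 : 'cV[R]_n)
  (t : nat) : 'cV[R]_n * 'cV[R]_n * 'cV[R]_n :=
  match t with
  | 0 => (x0, xb0, xl0)
  | t'.+1 =>
      let: (x, xb, xl) :=
        traj A B C E F Lb Ll Kb Kl w v x0 xb0 xl0 t' in
      let u := Kb *m xb + Kl *m xl in
      let y := C *m x + F *m v t' in
      (A *m x + B *m u + E *m w t',
       (A - Lb *m C) *m xb + Lb *m y + B *m u,
       (A - Ll *m C) *m xl + Ll *m y + B *m u)
  end.

(* componentwise expectation of a random column vector, as a real vector
   (all the random vectors below are integrable, so the expectations are finite) *)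
Definition Evec (d : measure_display) (T : measurableType d) (R : realType)
  (P : probability T R) (k : nat) (X : T -> 'cV[R]_k) : 'cV[R]_k :=
  \col_i fine (expectation P (fun om => X om i 0)).

Definition integrable_rvec (d : measure_display) (T : measurableType d)
  (R : realType) (P : probability T R) (k : nat) (X : T -> 'cV[R]_k) : Prop :=
  forall i, measurable_fun setT (fun om => X om i 0) /\
            P.-integrable setT (fun om => (X om i 0)%:E).

From HB Require Import structures.
From mathcomp Require Import all_boot all_order all_algebra.
From mathcomp Require Import all_classical all_reals all_analysis.
From mathcomp Require Import complex.
From mathcomp Require Import ring lra.
Import Order.TTheory GRing.Theory Num.Theory numFieldNormedType.Exports.
Local Open Scope classical_set_scope.
Local Open Scope ring_scope.

(* In the coordinates xl, el := x - xl, eb := xb - x the expected closed loop is, by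
   linearity of expectation, the deterministic recursion driven by w = v = 1:
     xl' = (A + B (Kb + Kl)) xl + (B Kb + Ll C) el + B Kb eb + Ll F 1,
     el' = (A - Ll C) el + (E 1 - Ll F 1),       eb' = (A - Lb C) eb + (Lb F 1 - E 1),
   and the set X becomes the nonnegative orthant.  One step maps the orthant into itself
   iff all matrices and constant vectors of this recursion are nonnegative (evaluate it at 0
   and at large multiples of unit vectors).  The recursion is block triangular, so all its
   trajectories converge to a common point iff the three diagonal blocks are Schur:
   sufficiency factors the characteristic polynomial over R[i] and contracts one eigenvalue
   at a time; necessity reads an eigenvalue z off a left eigenvector v, as v M^t e_j = z^t v_j. *)

(* The libraries put no topology on R[i]; use that of the normed field R[i]^o. *)
HB.instance Definition _ (R : rcfType) := NormedModule.copy R[i] (R[i])^o.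

Section MatrixConvergence.
Context {K : numFieldType} {T : Type} {F : set_system T} {FF : Filter F}.

Lemma cvg_mxP {m n} (s : T -> 'M[K]_(m, n)) (L : 'M[K]_(m, n)) :
  s @ F --> L <-> forall i j, (fun x => s x i j) @ F --> L i j.
Proof.
split=> [sL i j|sL]; first exact: continuous_cvg (@coord_continuous K m n i j L) sL.
apply/cvg_ballP => e e0.
have : \forall x \near F, forall i j, ball (L i j) e (s x i j).
  apply: filter_forall => i; apply: filter_forall => j.
  exact: (cvg_ballP _ _).1 (sL i j) e e0.
by apply: filterS => x Lsx; split.
Qed.

Lemma cvg_mulmxl {l m n} (M : 'M[K]_(l, m)) {s : T -> 'M[K]_(m, n)} {L} :
  s @ F --> L -> (fun x => M *m s x) @ F --> M *m L.
Proof.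
move=> /cvg_mxP sL; apply/cvg_mxP => i j; rewrite mxE.
under eq_cvg do rewrite mxE.
apply: cvg_big => [|k _]; first exact: add_continuous.
exact: cvgM (cvg_cst _) (sL k j).
Qed.

End MatrixConvergence.

Lemma norm_lt1_of_cvg_expr {K : numFieldType} {z : K} :
  (fun t => z ^+ t) @ \oo --> 0 -> `|z| < 1.
Proof.
move=> /(cvgr0Pnorm_lt _)/(_ 1 ltr01) [N _ zN].
rewrite real_ltNge ?normr_real ?real1 //; apply/negP => /(exprn_ege1 N) zN1.
by have := lt_le_trans (zN N (leqnn N)) zN1; rewrite normrX ltxx.
Qed.

Lemma cvg0_scalar_recurrence {K : numFieldType} {z : K} {s g : nat -> K} :
  (fun t => z ^+ t) @ \oo --> 0 -> (forall t, s t.+1 = z * s t + g t) ->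
  g @ \oo --> 0 -> s @ \oo --> 0.
Proof.
move=> zt0 sS g0; have z1 := norm_lt1_of_cvg_expr zt0.
set rho := `|z| in z1 *.
apply/cvgr0Pnorm_lt => e e0.
have e2 : 0 < e / 2 by rewrite divr_gt0 // ltr0Sn.
have d0 : 0 < e / 2 * (1 - rho) by rewrite mulr_gt0 // subr_gt0.
have [N _ gN] := (cvgr0Pnorm_lt _).1 g0 _ d0.
have sNk k : `|s (N + k)%N| <= rho ^+ k * `|s N| + e / 2.
  elim: k => [|k IH]; first by rewrite addn0 expr0 mul1r lerDl ltW.
  rewrite addnS sS (le_trans (ler_normD _ _)) // normrM.
  have gk : `|g (N + k)%N| <= e / 2 * (1 - rho) by rewrite ltW // gN /= ?leq_addr.
  apply: le_trans (lerD (ler_wpM2l (normr_ge0 z) IH) gk) _.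
  by rewrite exprS -/rho le_eqVlt; apply/orP; left; apply/eqP; ring.
have rho0 : (fun k => rho ^+ k * `|s N|) @ \oo --> 0.
  rewrite -(mul0r `|s N|); apply: cvgMr_tmp.
  by under eq_cvg do rewrite /rho -normrX; apply/norm_cvg0P.
have [M _ rhoM] := (cvgr0Pnorm_lt _).1 rho0 _ e2.
exists (N + M)%N => // t /= tNM.
have -> : t = (N + (t - N))%N by rewrite subnKC // (leq_trans (leq_addr _ _) tNM).
apply: le_lt_trans (sNk _) _.
rewrite [ltRHS](splitr e) ltrD2r.
rewrite -[X in X < _]ger0_norm ?mulr_ge0 ?exprn_ge0 ?normr_ge0 //; apply: rhoM.
by rewrite /= leq_subRL ?(leq_trans (leq_addr _ _) tNM) // addnC.
Qed.

Lemma cvg0_recurrence_annihilated {K : numFieldType} {k} (N : 'M[K]_k.+1)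
    (rs : seq K) (D e : nat -> 'cV[K]_k.+1) :
  (forall z, z \in rs -> (fun t => z ^+ t) @ \oo --> 0) ->
  (forall t, D t.+1 = N *m D t + e t) -> e @ \oo --> (0 : 'cV_k.+1) ->
  (fun t => horner_mx N (\prod_(z <- rs) ('X - z%:P)) *m D t) @ \oo --> (0 : 'cV_k.+1) ->
  D @ \oo --> (0 : 'cV_k.+1).
Proof.
move=> + DS e0; elim: rs => [_|z rs IH zrs PD0].
  by under eq_cvg do rewrite big_nil rmorph1 mul1mx.
apply: IH => [y yrs|]; first by apply: zrs; rewrite in_cons yrs orbT.
(* G is the state with the factor (N - z) peeled off: a scalar contraction by z in each
   entry, driven by (N - z) G + Pm e, which vanishes. *)
set Pm := horner_mx N _; set G := fun t => Pm *m D t.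
have PmN : Pm *m N = N *m Pm.
  by have := comm_horner_mx2 N (\prod_(y <- rs) ('X - y%:P)) 'X; rewrite horner_mx_X.
have GS t : G t.+1 = z *: G t + ((N - z%:M) *m G t + Pm *m e t).
  rewrite /G DS mulmxDr mulmxA PmN -mulmxA mulmxBl mul_scalar_mx.
  by rewrite addrA [z *: _ + _]addrC subrK.
have NG0 : (fun t => (N - z%:M) *m G t) @ \oo --> (0 : 'cV_k.+1).
  move: PD0; under eq_cvg do rewrite big_cons rmorphM rmorphB /= horner_mx_X horner_mx_C.
  by under eq_cvg do rewrite -mulmxE -mulmxA.
have h0 : (fun t => (N - z%:M) *m G t + Pm *m e t) @ \oo --> (0 : 'cV_k.+1).
  by rewrite -(addr0 0) -{2}(mulmx0 _ Pm); exact: cvgD NG0 (cvg_mulmxl Pm e0).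
apply/cvg_mxP => i j; rewrite mxE.
apply: (cvg0_scalar_recurrence (zrs z (mem_head _ _))
  (g := fun t => ((N - z%:M) *m G t + Pm *m e t) i j)) => [t|].
  by rewrite GS [LHS]mxE mxE.
by have := (cvg_mxP _ _).1 h0 i j; rewrite [X in _ --> X]mxE; apply.
Qed.

Section RealComplex.
Local Open Scope complex_scope.

Lemma normr_real_complex (R : rcfType) (x : R) : `|x%:C| = `|x|%:C.
Proof. by rewrite normc_def /= expr0n /= addr0 sqrtr_sqr. Qed.

Lemma cvg_real_complexP {R : rcfType} {T : Type} {F : set_system T} {FF : Filter F}
    (u : T -> R) (l : R) :
  (fun x => (u x)%:C) @ F --> l%:C <-> u @ F --> l.
Proof.
rewrite !cvgrPdist_lt; split=> ul e e0.
  have /ul : 0 < e%:C by rewrite ltcR.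
  by apply: filterS => x; rewrite -rmorphB normr_real_complex ltcR.
have eE : e = (complex.Re e)%:C by rewrite RRe_real // gtr0_real.
have /ul : 0 < complex.Re e by rewrite -ltcR -eE.
by apply: filterS => x; rewrite eE -rmorphB normr_real_complex ltcR.
Qed.

Lemma cvg_map_real_complexP {R : rcfType} {T : Type} {F : set_system T} {FF : Filter F}
    {m n} (s : T -> 'M[R]_(m, n)) (L : 'M[R]_(m, n)) :
  (fun x => map_mx (real_complex R) (s x)) @ F --> map_mx (real_complex R) L <->
  s @ F --> L.
Proof.
rewrite !cvg_mxP; split=> sL i j; last first.
  by rewrite mxE; under eq_cvg do rewrite mxE; apply/cvg_real_complexP.
by have := sL i j; rewrite mxE; under eq_cvg do rewrite mxE; move/cvg_real_complexP.
Qed.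

Lemma cvg_expr_complex (R : realType) (z : R[i]) :
  `|z| < 1 -> (fun t => z ^+ t) @ \oo --> 0.
Proof.
have zE : `|z| = (complex.Re `|z|)%:C by rewrite RRe_real // normr_real.
rewrite zE ltcR -(rmorph0 (real_complex R)) => z1; apply/norm_cvg0P.
under eq_cvg do rewrite normrX zE -rmorphXn.
apply/cvg_real_complexP/cvg_expr.
by rewrite ger0_norm // -lecR rmorph0 -zE.
Qed.

End RealComplex.

Lemma Schur_cvg0_recurrence {R : realType} {n} (M : 'M[R]_n) (d e : nat -> 'cV[R]_n) :
  is_Schur M -> (forall t, d t.+1 = M *m d t + e t) ->
  e @ \oo --> (0 : 'cV_n) -> d @ \oo --> (0 : 'cV_n).
Proof.
case: n => [|n] in M d e *.
  by move=> *; under eq_cvg do rewrite flatmx0; exact: cvg_cst.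
move=> MS dS e0; pose f := real_complex R; pose N := map_mx f M.
have [rs Nrs] := closed_field_poly_normal (char_poly N).
rewrite (monicP (char_poly_monic N)) scale1r in Nrs.
apply/(cvg_map_real_complexP _ _); rewrite map_mx0.
apply: (cvg0_recurrence_annihilated N rs _ (fun t => map_mx f (e t))) => [z zrs|t||].
- by apply/cvg_expr_complex/MS; rewrite eigenvalue_root_char Nrs root_prod_XsubC.
- by rewrite dS map_mxD map_mxM.
- by rewrite -(map_mx0 f); apply/(cvg_map_real_complexP _ _).
- by under eq_cvg do rewrite -Nrs Cayley_Hamilton mul0mx; exact: cvg_cst.
Qed.

Lemma Schur_of_cvg0_orbits (R : realType) n (M : 'M[R]_n) :
  (forall j : 'I_n, exists d : nat -> 'cV[R]_n,
     [/\ d 0%N = delta_mx j 0, forall t, d t.+1 = M *m d t & d @ \oo --> (0 : 'cV_n)]) ->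
  is_Schur M.
Proof.
move=> orbits z /eigenvalueP [v vM v0].
have [j vj0] : exists j, v 0 j != 0.
  apply/existsP; apply: contraR v0 => /existsPn vj0; apply/eqP/rowP => j.
  by have := vj0 j; rewrite negbK !mxE => /eqP.
have [d [d0 dS d_0]] := orbits j.
pose s t := (v *m map_mx (real_complex R) (d t)) 0 0.
have sE t : s t = z ^+ t * v 0 j.
  elim: t => [|t IH]; first by rewrite mul1r /s d0 map_delta_mx -colE mxE.
  by rewrite exprS -mulrA -IH /s dS map_mxM mulmxA vM -scalemxAl mxE.
apply: norm_lt1_of_cvg_expr.
have s0 : s @ \oo --> 0.
  have := (cvg_mxP _ _).1 (cvg_mulmxl v ((cvg_map_real_complexP _ _).2 d_0)) 0 0.
  by rewrite map_mx0 mulmx0 mxE; apply.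
have : (fun t => s t * (v 0 j)^-1) @ \oo --> 0.
  by rewrite -(mul0r (v 0 j)^-1); apply: cvgMr_tmp.
by under eq_cvg do rewrite sE mulfK //.
Qed.

Section Orthant.
Context {R : realType}.

Lemma cv_le0P {n} (x : 'cV[R]_n) : cv_le 0 x <-> mx_nonneg x.
Proof.
by split=> x0 i => [j|]; [move: (x0 i); rewrite ord1 | move: (x0 i 0)]; rewrite mxE.
Qed.

Lemma cv_leP {n} (x y : 'cV[R]_n) : cv_le x y <-> mx_nonneg (y - x).
Proof.
by split=> xy i => [j|]; [move: (xy i); rewrite ord1 | move: (xy i 0)]; rewrite !mxE subr_ge0.
Qed.

Lemma mx_nonneg0 m n : mx_nonneg (0 : 'M[R]_(m, n)).
Proof. by move=> i j; rewrite mxE. Qed.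

Lemma mx_nonnegD m n (M N : 'M[R]_(m, n)) :
  mx_nonneg M -> mx_nonneg N -> mx_nonneg (M + N).
Proof. by move=> M0 N0 i j; rewrite mxE addr_ge0. Qed.

Lemma mx_nonnegM m k n (M : 'M[R]_(m, k)) (N : 'M[R]_(k, n)) :
  mx_nonneg M -> mx_nonneg N -> mx_nonneg (M *m N).
Proof. by move=> M0 N0 i j; rewrite mxE sumr_ge0 // => l _; rewrite mulr_ge0. Qed.

Lemma mx_nonneg_cvg {m n} (s : nat -> 'M[R]_(m, n)) (L : 'M[R]_(m, n)) :
  (forall t, mx_nonneg (s t)) -> s @ \oo --> L -> mx_nonneg L.
Proof.
move=> s0 /cvg_mxP sL i j; rewrite -(cvg_lim _ (sL i j)) //.
by apply: limr_ge; [apply: cvgP; apply: sL|apply: nearW => t; apply: s0].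
Qed.

Lemma mx_nonneg_of_affine m n (M : 'M[R]_(m, n)) (c : 'cV[R]_m) :
  (forall z : 'cV_n, mx_nonneg z -> mx_nonneg (M *m z + c)) -> mx_nonneg M /\ mx_nonneg c.
Proof.
move=> Mc; split=> [i j|]; last by have := Mc 0 (mx_nonneg0 _ _); rewrite mulmx0 add0r.
rewrite leNgt; apply/negP => Mij0.
pose s := (`|c i 0| + 1) / - M i j.
have s0 : 0 <= s by rewrite divr_ge0 // ?addr_ge0 // oppr_ge0 ltW.
have : 0 <= s * M i j + c i 0.
  have := Mc (s *: delta_mx j 0) _ i 0; rewrite mxE -scalemxAr -colE !mxE; apply.
  by move=> k l; rewrite !mxE mulr_ge0.
have -> : s * M i j = - (`|c i 0| + 1).
  by rewrite /s; field; rewrite ltr0_neq0.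
have := ler_norm (c i 0); lra.
Qed.

End Orthant.

Section AffineFixpoint.
Context {R : realType} {n : nat}.
Implicit Types (M : 'M[R]_n) (c : 'cV[R]_n).

Lemma Schur_unitmx M : is_Schur M -> 1%:M - M \in unitmx.
Proof.
move=> MS; rewrite unitmxE unitfE; apply/negP => /det0P [v v0].
rewrite mulmxBr mulmx1 => /eqP; rewrite subr_eq0 => /eqP vM.
suff /MS : eigenvalue (map_mx (fun x : R => (x%:C)%C) M) 1 by rewrite normr1 ltxx.
apply/eigenvalueP; exists (map_mx (real_complex R) v); last by rewrite map_mx_eq0.
by rewrite -map_mxM -vM scale1r.
Qed.

Definition affine_fixpoint M c := invmx (1%:M - M) *m c.

Lemma affine_fixpointE M c : is_Schur M -> M *m affine_fixpoint M c + c = affine_fixpoint M c.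
Proof.
move=> /Schur_unitmx MU; set f := affine_fixpoint M c.
have : (1%:M - M) *m f = c by rewrite mulmxA mulmxV // mul1mx.
by rewrite mulmxBl mul1mx => <-; rewrite addrC subrK.
Qed.

Lemma Schur_cvg_affine M (c : nat -> 'cV[R]_n) cs (x : nat -> 'cV[R]_n) xs :
  is_Schur M -> M *m xs + cs = xs ->
  (forall t, x t.+1 = M *m x t + c t) -> c @ \oo --> cs -> x @ \oo --> xs.
Proof.
move=> MS xsE xS /subr_cvg0 ccs; apply/subr_cvg0.
apply: (Schur_cvg0_recurrence M _ (fun t => c t - cs) MS) => // t.
by rewrite xS -[in LHS]xsE mulmxBr opprD addrACA.
Qed.

Lemma Schur_of_cvg_affine M (c : nat -> 'cV[R]_n) (x : 'cV[R]_n -> nat -> 'cV[R]_n)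
    (l : 'cV[R]_n) :
  (forall u, x u 0%N = u) -> (forall u t, x u t.+1 = M *m x u t + c t) ->
  (forall u, mx_nonneg u -> x u @ \oo --> l) -> is_Schur M.
Proof.
move=> x0 xS xl; apply: Schur_of_cvg0_orbits => j.
have d0 : mx_nonneg (delta_mx j 0 : 'cV[R]_n) by move=> i k; rewrite mxE ler0n.
exists (fun t => x (delta_mx j 0) t - x 0 t); split.
- by rewrite !x0 subr0.
- by move=> t; rewrite !xS opprD addrACA subrr addr0 -mulmxBr.
- by have := cvgB (xl _ d0) (xl _ (mx_nonneg0 _ _)); rewrite subrr; apply.
Qed.

Lemma affine_fixpoint_nonneg M c :
  is_Schur M -> mx_nonneg M -> mx_nonneg c -> mx_nonneg (affine_fixpoint M c).
Proof.
move=> MS M0 c0; pose x t := iter t (fun y => M *m y + c) 0.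
apply: (mx_nonneg_cvg x) => [t|].
  elim: t => [|t IH]; first exact: mx_nonneg0.
  by apply: mx_nonnegD => //; apply: mx_nonnegM.
exact: Schur_cvg_affine _ _ _ x _ MS (affine_fixpointE M c MS) (fun=> erefl) (cvg_cst c).
Qed.

End AffineFixpoint.

Section Expectation.
Context {d : measure_display} {T : measurableType d} {R : realType} (P : probability T R).

Definition has_mean {k} (X : T -> 'cV[R]_k) (mu : 'cV[R]_k) :=
  forall i, (fun om => X om i 0) \in Lfun P 1 /\
            expectation P (fun om => X om i 0) = (mu i 0)%:E.

Lemma has_meanD {k} (X Y : T -> 'cV[R]_k) mu nu :
  has_mean X mu -> has_mean Y nu -> has_mean (fun om => X om + Y om) (mu + nu).
Proof.
move=> Xmu Ynu i; have [X1 EX] := Xmu i; have [Y1 EY] := Ynu i.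
under [fun om => _]funext do rewrite mxE.
by rewrite rpredD // expectationD // EX EY mxE.
Qed.

Lemma has_mean_mulmx {k l} (M : 'M[R]_(l, k)) (X : T -> 'cV[R]_k) mu :
  has_mean X mu -> has_mean (fun om => M *m X om) (M *m mu).
Proof.
move=> Xmu i; have Xj1 j : (fun om => X om j 0) \in Lfun P 1 by have [] := Xmu j.
have -> : (fun om => (M *m X om) i 0) = \sum_j M i j \o* (fun om => X om j 0).
  by rewrite fct_sumE; apply/funext => om; rewrite mxE; apply: eq_bigr => j _; rewrite mulrC.
split; first by apply: rpred_sum => j _; apply: Lfun_scale.
rewrite -(big_map _ predT id) expectation_sum => [|f /mapP[j _ ->]]; last exact: Lfun_scale.
rewrite mxE -sumEFin big_map; apply: eq_bigr => j _.
by rewrite expectationZl //; have [_ ->] := Xmu j.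
Qed.

Lemma has_mean_cst {k} (c : 'cV[R]_k) : has_mean (fun=> c) c.
Proof. by move=> i; rewrite Lfun_cst expectation_cst. Qed.

Lemma has_mean_ones {k} (X : T -> 'cV[R]_k) :
  (forall om, cv_le 0 (X om)) -> (forall i, measurable_fun setT (fun om => X om i 0)) ->
  (forall i, expectation P (fun om => X om i 0) = 1%E) -> has_mean X (ones R k).
Proof.
move=> X0 Xm EX i; rewrite EX mxE; split=> //; apply/Lfun1_integrable/integrableP.
split; first exact/measurable_realfun.measurable_EFinP.
have := EX i; rewrite unlock => EXi.
under eq_integral => x _ do rewrite /comp /= ger0_norm ?(proj1 (cv_le0P _) (X0 x) i 0) //.
by rewrite EXi ltry.
Qed.

Lemma has_mean_Evec {k} (X : T -> 'cV[R]_k) : integrable_rvec P X -> has_mean X (Evec P X).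
Proof.
move=> Xint i; have [_ /Lfun1_integrable X1] := Xint i.
by rewrite mxE fineK ?expectation_fin_num.
Qed.

Lemma Evec_has_mean {k} (X : T -> 'cV[R]_k) mu : has_mean X mu -> Evec P X = mu.
Proof. by move=> Xmu; apply/colP => i; rewrite mxE; have [_ ->] := Xmu i. Qed.

Lemma has_mean_integrable {k} (X : T -> 'cV[R]_k) mu : has_mean X mu -> integrable_rvec P X.
Proof.
move=> Xmu i; have [/Lfun1_integrable Xi _] := Xmu i; split=> //.
by apply/measurable_realfun.measurable_EFinP; have /integrableP[] := Xi.
Qed.

End Expectation.

Arguments has_meanD {d T R P k X Y mu nu}.
Arguments has_mean_mulmx {d T R P k l} M {X mu}.

Section Observer.
Context {R : realType} {n m p q r : nat}.
Variables (A : 'M[R]_n) (B : 'M[R]_(n, m)) (C : 'M[R]_(p, n)) (E : 'M[R]_(n, q))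
  (F : 'M[R]_(p, r)) (Lb Ll : 'M[R]_(n, p)) (Kb Kl : 'M[R]_(m, n)).

Local Notation state := ('cV[R]_n * 'cV[R]_n * 'cV[R]_n)%type.
Local Notation Mk := (A + B *m (Kb + Kl)).
Local Notation Mb := (A - Lb *m C).
Local Notation Ml := (A - Ll *m C).
Local Notation Gb := (B *m Kb).
Local Notation Gl := (B *m Kb + Ll *m C).
Local Notation cb := (Lb *m F *m ones R r - E *m ones R q).
Local Notation cl := (E *m ones R q - Ll *m F *m ones R r).
Local Notation cF := (Ll *m F *m ones R r).

Definition observer_step (wt : 'cV[R]_q) (vt : 'cV[R]_r) (X : state) : state :=
  let u := Kb *m X.1.2 + Kl *m X.2 in
  let y := C *m X.1.1 + F *m vt in
  (A *m X.1.1 + B *m u + E *m wt,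
   Mb *m X.1.2 + Lb *m y + B *m u,
   Ml *m X.2 + Ll *m y + B *m u).

Lemma trajS w v x0 xb0 xl0 t :
  traj A B C E F Lb Ll Kb Kl w v x0 xb0 xl0 t.+1 =
  observer_step (w t) (v t) (traj A B C E F Lb Ll Kb Kl w v x0 xb0 xl0 t).
Proof. by rewrite /=; case: traj => [[]]. Qed.

Definition err_up (X : state) := X.1.2 - X.1.1.
Definition err_lo (X : state) := X.1.1 - X.2.
Definition of_err (xl el eb : 'cV[R]_n) : state := (xl + el, xl + el + eb, xl).

Lemma err_lo_of_err xl el eb : err_lo (of_err xl el eb) = el.
Proof. by rewrite /err_lo /= addrC addKr. Qed.

Lemma err_up_of_err xl el eb : err_up (of_err xl el eb) = eb.
Proof. by rewrite /err_up /= addrC addKr. Qed.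

Lemma in_calXE X :
  in_calX X <-> [/\ mx_nonneg X.2, mx_nonneg (err_lo X) & mx_nonneg (err_up X)].
Proof.
case: X => [[x xb] xl]; rewrite /err_lo /err_up /=.
split=> [[_ _ /cv_le0P ? /cv_leP ? /cv_leP ?] //|[xl0 elo eup]].
have x0 : mx_nonneg x by rewrite -(subrK xl x); apply: mx_nonnegD.
split; [exact/cv_le0P | apply/cv_le0P | exact/cv_le0P | exact/cv_leP | exact/cv_leP].
by rewrite -(subrK x xb); apply: mx_nonnegD.
Qed.

Lemma observer_step_err wt vt X :
  let X' := observer_step wt vt X in
  [/\ X'.2 = Mk *m X.2 + (Gl *m err_lo X + Gb *m err_up X + Ll *m F *m vt),
      err_lo X' = Ml *m err_lo X + (E *m wt - Ll *m F *m vt)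
    & err_up X' = Mb *m err_up X + (Lb *m F *m vt - E *m wt)].
Proof.
case: X => [[x xb] xl]; rewrite /err_lo /err_up /=.
by split; rewrite !(mulmxDr, mulmxBr, mulmxDl, mulmxBl, mulNmx, mulmxN, mulmxA);
  apply/matrixP => i j; rewrite !mxE; ring.
Qed.

Lemma in_calX_of_err {xl el eb} :
  mx_nonneg xl -> mx_nonneg el -> mx_nonneg eb -> in_calX (of_err xl el eb).
Proof. by move=> xl0 el0 eb0; apply/in_calXE; rewrite err_lo_of_err err_up_of_err. Qed.

Definition mean_traj (X0 : state) t :=
  traj A B C E F Lb Ll Kb Kl (fun=> ones R q) (fun=> ones R r) X0.1.1 X0.1.2 X0.2 t.

Lemma mean_traj0 X0 : mean_traj X0 0 = X0.
Proof. by case: X0 => [[]]. Qed.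

Lemma mean_trajS X0 t :
  mean_traj X0 t.+1 = observer_step (ones R q) (ones R r) (mean_traj X0 t).
Proof. exact: trajS. Qed.

Lemma mean_traj_errS X0 t :
  let X := mean_traj X0 t in let X' := mean_traj X0 t.+1 in
  [/\ X'.2 = Mk *m X.2 + (Gl *m err_lo X + Gb *m err_up X + cF),
      err_lo X' = Ml *m err_lo X + cl
    & err_up X' = Mb *m err_up X + cb].
Proof. by rewrite /= mean_trajS; apply: observer_step_err. Qed.

Lemma observer_step_calXP :
  (forall X, in_calX X -> in_calX (observer_step (ones R q) (ones R r) X)) <->
  [/\ mx_nonneg Mk, mx_nonneg Gl, mx_nonneg Gb, mx_nonneg Ml & mx_nonneg Mb] /\
  [/\ mx_nonneg cF, mx_nonneg cl & mx_nonneg cb].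
Proof.
split=> [step|[[Mk0 Gl0 Gb0 Ml0 Mb0] [cF0 cl0 cb0]] X /in_calXE[xl0 el0 eb0]]; last first.
  apply/in_calXE; have [-> -> ->] := observer_step_err (ones R q) (ones R r) X.
  by split; do ?[assumption | apply: mx_nonnegD | apply: mx_nonnegM].
have step_err xl el eb : mx_nonneg xl -> mx_nonneg el -> mx_nonneg eb ->
    [/\ mx_nonneg (Mk *m xl + (Gl *m el + Gb *m eb + cF)),
        mx_nonneg (Ml *m el + cl) & mx_nonneg (Mb *m eb + cb)].
  move=> xl0 el0 eb0; have /step/in_calXE := in_calX_of_err xl0 el0 eb0.
  by have [-> -> ->] := observer_step_err (ones R q) (ones R r) (of_err xl el eb);
    rewrite err_lo_of_err err_up_of_err.
have z0 := @mx_nonneg0 R n 1.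
have [Mk0 cF0] : mx_nonneg Mk /\ mx_nonneg cF.
  by apply: mx_nonneg_of_affine => z z0'; have [] := step_err z 0 0 z0' z0 z0;
    rewrite !mulmx0 !add0r.
have [Gl0 _] : mx_nonneg Gl /\ mx_nonneg cF.
  by apply: mx_nonneg_of_affine => z z0'; have [] := step_err 0 z 0 z0 z0' z0;
    rewrite !mulmx0 add0r addr0.
have [Gb0 _] : mx_nonneg Gb /\ mx_nonneg cF.
  by apply: mx_nonneg_of_affine => z z0'; have [] := step_err 0 0 z z0 z0 z0';
    rewrite !mulmx0 !add0r.
have [Ml0 cl0] : mx_nonneg Ml /\ mx_nonneg cl.
  by apply: mx_nonneg_of_affine => z z0'; have [] := step_err 0 z 0 z0 z0' z0.
have [Mb0 cb0] : mx_nonneg Mb /\ mx_nonneg cb.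
  by apply: mx_nonneg_of_affine => z z0'; have [] := step_err 0 0 z z0 z0 z0'.
by [].
Qed.

Definition cvg_state (X : nat -> state) (Xs : state) :=
  (fun t => (X t).1.1) @ \oo --> Xs.1.1 /\ (fun t => (X t).1.2) @ \oo --> Xs.1.2 /\
  (fun t => (X t).2) @ \oo --> Xs.2.

Lemma cvg_state_of_err X xl el eb :
  (fun t => (X t).2) @ \oo --> xl -> (fun t => err_lo (X t)) @ \oo --> el ->
  (fun t => err_up (X t)) @ \oo --> eb -> cvg_state X (of_err xl el eb).
Proof.
move=> xl_cvg el_cvg eb_cvg.
have x_cvg : (fun t => (X t).1.1) @ \oo --> xl + el.
  have -> : (fun t => (X t).1.1) = (fun t => (X t).2 + err_lo (X t)).
    by apply/funext => t; rewrite addrC subrK.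
  exact: cvgD xl_cvg el_cvg.
split=> //; split=> //.
have -> : (fun t => (X t).1.2) = (fun t => (X t).1.1 + err_up (X t)).
  by apply/funext => t; rewrite addrC subrK.
exact: cvgD x_cvg eb_cvg.
Qed.

Definition eb_star := affine_fixpoint Mb cb.
Definition el_star := affine_fixpoint Ml cl.
Definition xl_star := affine_fixpoint Mk (Gl *m el_star + Gb *m eb_star + cF).
Definition X_star := of_err xl_star el_star eb_star.

Lemma mean_traj_cvg X0 : is_Schur Mk -> is_Schur Mb -> is_Schur Ml ->
  cvg_state (mean_traj X0) X_star.
Proof.
move=> MkS MbS MlS.
have el_cvg : (fun t => err_lo (mean_traj X0 t)) @ \oo --> el_star.
  apply: (Schur_cvg_affine Ml (fun=> cl) cl _ _ MlS (affine_fixpointE _ _ MlS)) => [t|].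
    by have [_ -> _] := mean_traj_errS X0 t.
  exact: cvg_cst.
have eb_cvg : (fun t => err_up (mean_traj X0 t)) @ \oo --> eb_star.
  apply: (Schur_cvg_affine Mb (fun=> cb) cb _ _ MbS (affine_fixpointE _ _ MbS)) => [t|].
    by have [_ _ ->] := mean_traj_errS X0 t.
  exact: cvg_cst.
apply: cvg_state_of_err => //.
apply: (Schur_cvg_affine Mk (fun t => Gl *m err_lo (mean_traj X0 t) +
  Gb *m err_up (mean_traj X0 t) + cF) _ _ _ MkS (affine_fixpointE _ _ MkS)) => [t|].
  by have [-> _ _] := mean_traj_errS X0 t.
by apply: cvgD; [apply: cvgD; apply: cvg_mulmxl | exact: cvg_cst].
Qed.

Lemma X_star_calX :
  is_Schur Mk -> is_Schur Mb -> is_Schur Ml ->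
  (forall X, in_calX X -> in_calX (observer_step (ones R q) (ones R r) X)) ->
  in_calX X_star.
Proof.
move=> MkS MbS MlS /observer_step_calXP[[Mk0 Gl0 Gb0 Ml0 Mb0] [cF0 cl0 cb0]].
have eb0 : mx_nonneg eb_star by apply: affine_fixpoint_nonneg.
have el0 : mx_nonneg el_star by apply: affine_fixpoint_nonneg.
apply: in_calX_of_err => //; apply: affine_fixpoint_nonneg => //.
by do 2![apply: mx_nonnegD => //]; apply: mx_nonnegM.
Qed.

Lemma eq_err_mean_traj X0 Y0 t :
  err_lo X0 = err_lo Y0 -> err_up X0 = err_up Y0 ->
  err_lo (mean_traj X0 t) = err_lo (mean_traj Y0 t) /\
  err_up (mean_traj X0 t) = err_up (mean_traj Y0 t).
Proof.
move=> lo0 up0; elim: t => [|t [lo up]]; first by rewrite !mean_traj0.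
have [_ -> ->] := mean_traj_errS X0 t.
by have [_ -> ->] := mean_traj_errS Y0 t; rewrite lo up.
Qed.

Lemma Schur_of_mean_cvg Xs :
  (forall X0, in_calX X0 -> cvg_state (mean_traj X0) Xs) ->
  [/\ is_Schur Mk, is_Schur Mb & is_Schur Ml].
Proof.
move=> mean_cvg.
have err_cvg xl el eb : mx_nonneg xl -> mx_nonneg el -> mx_nonneg eb ->
    let X := mean_traj (of_err xl el eb) in
    [/\ (fun t => (X t).2) @ \oo --> Xs.2,
        (fun t => err_lo (X t)) @ \oo --> Xs.1.1 - Xs.2
      & (fun t => err_up (X t)) @ \oo --> Xs.1.2 - Xs.1.1].
  move=> xl0 el0 eb0 X.
  have [x_cvg [xb_cvg xl_cvg]] := mean_cvg _ (in_calX_of_err xl0 el0 eb0).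
  by split; [exact: xl_cvg | exact: cvgB x_cvg xl_cvg | exact: cvgB xb_cvg x_cvg].
have z0 := @mx_nonneg0 R n 1; pose Z := mean_traj (of_err 0 0 0).
split.
- apply: (Schur_of_cvg_affine _ (fun t => Gl *m err_lo (Z t) + Gb *m err_up (Z t) + cF)
    (fun u t => (mean_traj (of_err u 0 0) t).2) Xs.2) => [u|u t|u u0].
  + by rewrite mean_traj0.
  + have [lo up] := eq_err_mean_traj (of_err u 0 0) (of_err 0 0 0) t
      (etrans (err_lo_of_err _ _ _) (esym (err_lo_of_err _ _ _)))
      (etrans (err_up_of_err _ _ _) (esym (err_up_of_err _ _ _))).
    by rewrite -lo -up; have [-> _ _] := mean_traj_errS (of_err u 0 0) t.
  + by have [] := err_cvg u 0 0 u0 z0 z0.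
- apply: (Schur_of_cvg_affine _ (fun=> cb)
    (fun u t => err_up (mean_traj (of_err 0 0 u) t)) (Xs.1.2 - Xs.1.1)) => [u|u t|u u0].
  + by rewrite mean_traj0 err_up_of_err.
  + by have [_ _ ->] := mean_traj_errS (of_err 0 0 u) t.
  + by have [] := err_cvg 0 0 u z0 z0 u0.
- apply: (Schur_of_cvg_affine _ (fun=> cl)
    (fun u t => err_lo (mean_traj (of_err 0 u 0) t)) (Xs.1.1 - Xs.2)) => [u|u t|u u0].
  + by rewrite mean_traj0 err_lo_of_err.
  + by have [_ -> _] := mean_traj_errS (of_err 0 u 0) t.
  + by have [] := err_cvg 0 u 0 z0 u0 z0.
Qed.

Definition observer_conditions :=
  [/\ is_Schur Mk, is_Schur Mb & is_Schur Ml] /\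
  (mx_nonneg Mk /\ mx_nonneg (A + B *m Kb) /\ mx_nonneg Gb /\ mx_nonneg Mb /\
   mx_nonneg Ml /\ mx_nonneg Gl) /\
  [/\ mx_nonneg cb, mx_nonneg cl & mx_nonneg cF].

Lemma mean_traj_stableP :
  mx_nonneg A ->
  observer_conditions <->
  exists Xs, in_calX Xs /\ forall X0, in_calX X0 ->
    (forall t, in_calX (mean_traj X0 t)) /\ cvg_state (mean_traj X0) Xs.
Proof.
move=> A0; split=> [[[MkS MbS MlS] [[Mk0 [_ [Gb0 [Mb0 [Ml0 Gl0]]]]] [cb0 cl0 cF0]]]|].
  have step0 : forall X, in_calX X -> in_calX (observer_step (ones R q) (ones R r) X).
    by apply/observer_step_calXP.
  exists X_star; split; first exact: X_star_calX.
  move=> X0 X00; split; last exact: mean_traj_cvg.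
  by elim=> [|t IH]; rewrite ?mean_traj0 ?mean_trajS; last apply: step0.
move=> [Xs [_ stable]].
have /observer_step_calXP[[Mk0 Gl0 Gb0 Ml0 Mb0] [cF0 cl0 cb0]] : forall X, in_calX X ->
    in_calX (observer_step (ones R q) (ones R r) X).
  by move=> X X0; have [/(_ 1%N)] := stable X X0; rewrite mean_trajS mean_traj0.
split; first by apply: (Schur_of_mean_cvg Xs) => X0 /stable[].
by split; do ?split=> //; apply: mx_nonnegD.
Qed.

Definition has_mean_state {d} {T : measurableType d} (P : probability T R)
    (X : T -> state) (mu : state) :=
  [/\ has_mean P (fun om => (X om).1.1) mu.1.1, has_mean P (fun om => (X om).1.2) mu.1.2
    & has_mean P (fun om => (X om).2) mu.2].

Lemma has_mean_observer_step {d} {T : measurableType d} (P : probability T R)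
    (wt : T -> 'cV[R]_q) (vt : T -> 'cV[R]_r) (X X' : T -> state) mu :
  has_mean P wt (ones R q) -> has_mean P vt (ones R r) ->
  (forall om, X' om = observer_step (wt om) (vt om) (X om)) ->
  has_mean_state P X mu -> has_mean_state P X' (observer_step (ones R q) (ones R r) mu).
Proof.
move=> wE vE /funext -> [xE xbE xlE].
have uE := has_meanD (has_mean_mulmx Kb xbE) (has_mean_mulmx Kl xlE).
have yE := has_meanD (has_mean_mulmx C xE) (has_mean_mulmx F vE).
split.
- exact: has_meanD (has_meanD (has_mean_mulmx A xE) (has_mean_mulmx B uE))
                   (has_mean_mulmx E wE).
- exact: has_meanD (has_meanD (has_mean_mulmx _ xbE) (has_mean_mulmx Lb yE))
                   (has_mean_mulmx B uE).
- exact: has_meanD (has_meanD (has_mean_mulmx _ xlE) (has_mean_mulmx Ll yE))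
                   (has_mean_mulmx B uE).
Qed.

Lemma Evec_traj {d} {T : measurableType d} (P : probability T R)
    (w : nat -> T -> 'cV[R]_q) (v : nat -> T -> 'cV[R]_r) (x0 xb0 xl0 : T -> 'cV[R]_n) :
  (forall t, has_mean P (w t) (ones R q)) -> (forall t, has_mean P (v t) (ones R r)) ->
  integrable_rvec P x0 -> integrable_rvec P xb0 -> integrable_rvec P xl0 ->
  (fun t =>
    (Evec P (fun om => (traj A B C E F Lb Ll Kb Kl (w^~ om) (v^~ om)
                          (x0 om) (xb0 om) (xl0 om) t).1.1),
     Evec P (fun om => (traj A B C E F Lb Ll Kb Kl (w^~ om) (v^~ om)
                          (x0 om) (xb0 om) (xl0 om) t).1.2),
     Evec P (fun om => (traj A B C E F Lb Ll Kb Kl (w^~ om) (v^~ om)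
                          (x0 om) (xb0 om) (xl0 om) t).2))) =
  mean_traj (Evec P x0, Evec P xb0, Evec P xl0).
Proof.
move=> wE vE /has_mean_Evec x0E /has_mean_Evec xb0E /has_mean_Evec xl0E.
suff XE t : has_mean_state P
    (fun om => traj A B C E F Lb Ll Kb Kl (w^~ om) (v^~ om) (x0 om) (xb0 om) (xl0 om) t)
    (mean_traj (Evec P x0, Evec P xb0, Evec P xl0) t).
  apply/funext => t; have [/Evec_has_mean -> /Evec_has_mean -> /Evec_has_mean ->] := XE t.
  by case: (mean_traj _ t) => [[]].
elim: t => [|t IH]; first by split; [exact: x0E | exact: xb0E | exact: xl0E].
rewrite mean_trajS.
by apply: has_mean_observer_step (wE t) (vE t) _ IH => om; apply: trajS.
Qed.

End Observer.

Theorem theorem2 (d : measure_display) (T : measurableType d) (R : realType)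
  (P : probability T R) (n m p q r : nat)
  (A : 'M[R]_n) (B : 'M[R]_(n, m)) (C : 'M[R]_(p, n)) (E : 'M[R]_(n, q))
  (F : 'M[R]_(p, r)) (Lb Ll : 'M[R]_(n, p)) (Kb Kl : 'M[R]_(m, n))
  (w : nat -> T -> 'cV[R]_q) (v : nat -> T -> 'cV[R]_r) :
  mx_nonneg A -> mx_nonneg E ->
  (* w(t) in R^q_+, v(t) in R^r_+ random vectors with E[w(t)] = E[v(t)] = 1 *)
  (forall t om, cv_le 0 (w t om)) -> (forall t om, cv_le 0 (v t om)) ->
  (forall t i, measurable_fun setT (fun om => w t om i 0)) ->
  (forall t i, measurable_fun setT (fun om => v t om i 0)) ->
  (forall t i, expectation P (fun om => w t om i 0) = 1%E) ->
  (forall t i, expectation P (fun om => v t om i 0) = 1%E) ->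
  ( [/\ is_Schur (A + B *m (Kb + Kl)), is_Schur (A - Lb *m C) & is_Schur (A - Ll *m C)]
    /\
    (mx_nonneg (A + B *m (Kb + Kl)) /\ mx_nonneg (A + B *m Kb) /\
     mx_nonneg (B *m Kb) /\ mx_nonneg (A - Lb *m C) /\ mx_nonneg (A - Ll *m C) /\
     mx_nonneg (B *m Kb + Ll *m C))
    /\
    [/\ mx_nonneg (Lb *m F *m ones R r - E *m ones R q),
        mx_nonneg (E *m ones R q - Ll *m F *m ones R r)
      & mx_nonneg (Ll *m F *m ones R r)] )
  <->
  ( exists Xstar : 'cV[R]_n * 'cV[R]_n * 'cV[R]_n,
      in_calX Xstar /\
      forall x0 xb0 xl0 : T -> 'cV[R]_n,
        integrable_rvec P x0 -> integrable_rvec P xb0 -> integrable_rvec P xl0 ->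
        (forall om, cv_le 0 (x0 om)) ->
        in_calX (Evec P x0, Evec P xb0, Evec P xl0) ->
        let X := fun t =>
          (Evec P (fun om => (traj A B C E F Lb Ll Kb Kl
                                (w^~ om) (v^~ om) (x0 om) (xb0 om) (xl0 om) t).1.1),
           Evec P (fun om => (traj A B C E F Lb Ll Kb Kl
                                (w^~ om) (v^~ om) (x0 om) (xb0 om) (xl0 om) t).1.2),
           Evec P (fun om => (traj A B C E F Lb Ll Kb Kl
                                (w^~ om) (v^~ om) (x0 om) (xb0 om) (xl0 om) t).2)) in
        (forall t, in_calX (X t)) /\
        ((fun t => (X t).1.1) @ \oo --> Xstar.1.1) /\
        ((fun t => (X t).1.2) @ \oo --> Xstar.1.2) /\
        ((fun t => (X t).2) @ \oo --> snd Xstar) ).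
Proof.
move=> A0 _ w0 v0 wm vm wE vE.
have wmean t := has_mean_ones P (w t) (w0 t) (wm t) (wE t).
have vmean t := has_mean_ones P (v t) (v0 t) (vm t) (vE t).
have EX x0 xb0 xl0 := Evec_traj A B C E F Lb Ll Kb Kl P w v x0 xb0 xl0 wmean vmean.
apply: (iff_trans (mean_traj_stableP A B C E F Lb Ll Kb Kl A0)).
split=> -[Xs [Xs0 stable]]; exists Xs; split=> //.
  move=> x0 xb0 xl0 x0i xb0i xl0i _ X00 X.
  by have -> : X = _ := EX _ _ _ x0i xb0i xl0i; apply: stable.
move=> [[x xb] xl] X00; have [x0 _ _ _ _] := X00.
have cstE (c : 'cV[R]_n) : Evec P (fun=> c) = c := Evec_has_mean P _ _ (has_mean_cst P c).
have cst_int (c : 'cV[R]_n) : integrable_rvec P (fun=> c) :=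
  has_mean_integrable P _ _ (has_mean_cst P c).
have := stable _ _ _ (cst_int x) (cst_int xb) (cst_int xl) (fun=> x0).
rewrite !cstE => /(_ X00).
by rewrite (EX _ _ _ (cst_int x) (cst_int xb) (cst_int xl)) !cstE.
Qed.
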